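(* For every integer $k\geq 0$, $$d_{\mathcal F}\!\left(\frac{F_{k+1}}{F_k},\,\infty\right)=\lfloor k/2\rfloor+1,$$ where $(F_j)$ are the Fibonacci numbers indexed so that $F_0=F_1=1$ and $F_{j+1}=F_j+F_{j-1}$ (so $\frac{F_{k+1}}{F_k}=\frac11,\frac21,\frac32,\frac53,\dots$ for $k=0,1,2,3,\dots$), and $\infty=\frac10$.
   Context: The Farey graph has vertex set $\mathbb Q\cup\{\infty\}$, where each element is written in lowest terms $\frac ab$ ($\infty=\frac10$), and an edge between $\frac ab$ and $\frac cd$ exactly when $|ad-bc|=1$. (Equivalently, vertices are slopes of a torus, adjacent when they have representatives meeting transversely in one point.) $d_{\mathcal F}$ denotes the path-length distance in the Farey graph. *)

From Stdlib Require Import ZArith Arith Lia.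
Open Scope Z_scope.

(* A vertex a/b of the Farey graph, in lowest terms with a canonical sign:
   b > 0 and gcd(a,b) = 1 (a rational), or (a,b) = (1,0) (infinity). *)
Definition farey_vertex (v : Z * Z) : Prop :=
  let (a, b) := v in
  Z.gcd a b = 1 /\ (0 < b \/ (b = 0 /\ a = 1)).

Definition farey_infty : Z * Z := (1, 0).

Definition farey_adj (v w : Z * Z) : Prop :=
  let (a, b) := v in let (c, d) := w in Z.abs (a * d - b * c) = 1.

Inductive farey_walk : Z * Z -> Z * Z -> nat -> Prop :=
| fw_nil : forall x, farey_vertex x -> farey_walk x x 0
| fw_cons : forall x y z n, farey_vertex x -> farey_adj x y ->
    farey_walk y z n -> farey_walk x z (S n).

Definition farey_dist (x y : Z * Z) (n : nat) : Prop :=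
  farey_walk x y n /\ forall m, farey_walk x y m -> (n <= m)%nat.

Fixpoint fib (n : nat) : nat :=
  match n with
  | O => 1
  | S m => match m with
           | O => 1
           | S p => fib m + fib p
           end
  end%nat.

(* The Farey edge between F_{j+2}/F_{j+1} and F_{j+1}/F_j separates F_{j+3}/F_{j+2}
   from infinity, and no Farey edge crosses another one; so every walk from
   F_{j+3}/F_{j+2} to infinity passes through one of the two endpoints, which
   gives d_k >= min(d_{k-1}, d_{k-2}) + 1 for the distances d_k to infinity.
   Conversely F_{k+2}/F_{k+1} is adjacent to F_k/F_{k-1} by Cassini's identity,
   so d_{k+2} <= d_k + 1, and F_1/F_0, F_2/F_1 are adjacent to infinity. *)

From Stdlib Require Import ZArith Arith Lia.

Open Scope Z_scope.

Definition det (u v : Z * Z) : Z := fst u * snd v - snd u * fst v.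

Lemma farey_adjE (u v : Z * Z) : farey_adj u v <-> Z.abs (det u v) = 1.
Proof. destruct u, v; reflexivity. Qed.

Lemma det_plucker (u v p r : Z * Z) :
  det u v * det r p = det u p * det r v - det r u * det v p.
Proof. destruct u, v, p, r; unfold det; simpl; ring. Qed.

Lemma det_antisym (u v : Z * Z) : det u v = - det v u.
Proof. unfold det; ring. Qed.

Lemma gcd_of_unimodular (u v : Z * Z) :
  Z.abs (det u v) = 1 -> Z.gcd (fst u) (snd u) = 1.
Proof.
  destruct u as [a b], v as [c d]; unfold det; simpl; intros Huv.
  apply Z.bezout_1_gcd.
  exists (d * (a * d - b * c)), (- c * (a * d - b * c)).
  assert (Hsq : (a * d - b * c) * (a * d - b * c) = 1) by nia.
  rewrite <- Hsq; ring.
Qed.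

Lemma abs_sub_mul_ge2 (a b c d : Z) :
  0 < a * c -> d * b < 0 -> 2 <= Z.abs (a * b - c * d).
Proof. rewrite Z.lt_0_mul, Z.lt_mul_0; intros [[] | []] [[] | []]; nia. Qed.

Lemma farey_walk_vertex (x y : Z * Z) (n : nat) :
  farey_walk x y n -> farey_vertex x.
Proof. now destruct 1. Qed.

Lemma farey_walk_0 (x y : Z * Z) : farey_walk x y 0 -> x = y.
Proof. now inversion 1. Qed.

Lemma farey_vertex_infty : farey_vertex farey_infty.
Proof. simpl; lia. Qed.

(* [p], [r] is a basis of Z^2, and [det r v * det r p] is the coordinate of
   [v] along [p] when [v] lies on the line through [p]. *)
Lemma farey_vertex_on_line (p r v : Z * Z) :
  Z.abs (det r p) = 1 -> farey_vertex v -> 0 < snd p -> det v p = 0 -> v = p.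
Proof.
  destruct v as [c d], p as [a b], r as [x y]; unfold det; simpl.
  intros Hrp [Hg Hd] Hb Hvp.
  set (e := x * b - y * a) in *; set (t := (x * d - y * c) * e).
  assert (Hee : e * e = 1) by nia.
  assert (Hc : c = a * t).
  { transitivity (c * (e * e) - x * e * (c * b - d * a)); [rewrite Hee, Hvp; ring|].
    unfold t, e; ring. }
  assert (Hd' : d = b * t).
  { transitivity (d * (e * e) - y * e * (c * b - d * a)); [rewrite Hee, Hvp; ring|].
    unfold t, e; ring. }
  assert (Ht : (t | 1)).
  { rewrite <- Hg; apply Z.gcd_greatest; [exists a | exists b]; lia. }
  apply Z.divide_1_r in Ht; destruct Ht as [Ht | Ht]; rewrite Ht in Hc, Hd';
    f_equal; lia.
Qed.

Section FareyEdge.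

Variables p r : Z * Z.
Hypothesis p_r_edge : Z.abs (det r p) = 1.

(* Positive for points strictly inside the Farey interval spanned by [p] and
   [r], negative for points strictly outside it. *)
Definition side (u : Z * Z) : Z := det u p * det r u.

Lemma side_infty : side farey_infty = - snd p * snd r.
Proof. unfold side, det, farey_infty; cbn [fst snd]; ring. Qed.

Lemma farey_adj_no_crossing (u v : Z * Z) :
  0 < side u -> side v < 0 -> ~ farey_adj u v.
Proof.
  unfold side; rewrite farey_adjE; intros Hu Hv Huv.
  assert (Hcross : Z.abs (det u p * det r v - det r u * det v p) = 1).
  { now rewrite <- det_plucker, Z.abs_mul, Huv, p_r_edge. }
  pose proof (abs_sub_mul_ge2 _ _ _ _ Hu Hv); lia.
Qed.

Lemma farey_walk_crosses_edge (u w : Z * Z) (n : nat) :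
  0 < snd p -> 0 < snd r -> farey_walk u w n -> 0 < side u -> side w < 0 ->
  exists m, (m < n)%nat /\ (farey_walk p w m \/ farey_walk r w m).
Proof.
  intros Hp Hr Hw; induction Hw as [x _ | x y z n _ Hxy Hyz IH]; intros Hin Hout.
  { lia. }
  pose proof (farey_walk_vertex _ _ _ Hyz) as Hy.
  destruct (Z.eq_dec (det y p) 0) as [Hyp | Hyp].
  { rewrite (farey_vertex_on_line p r y p_r_edge Hy Hp Hyp) in Hyz; exists n; auto. }
  destruct (Z.eq_dec (det r y) 0) as [Hry | Hry].
  { assert (Hyr : y = r).
    { apply (farey_vertex_on_line r p y); auto.
      - now rewrite det_antisym, Z.abs_opp.
      - now rewrite det_antisym, Hry. }
    rewrite Hyr in Hyz; exists n; auto. }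
  destruct (Z_lt_le_dec 0 (side y)) as [Hyin | Hyout].
  - destruct (IH Hyin Hout) as [m [Hm Hpw]]; exists m; split; [lia | exact Hpw].
  - exfalso; apply (farey_adj_no_crossing x y Hin); [| exact Hxy].
    assert (side y <> 0) by (unfold side; now apply Z.neq_mul_0).
    lia.
Qed.

End FareyEdge.

Definition fibz (n : nat) : Z := Z.of_nat (fib n).

Definition fib_point (k : nat) : Z * Z := (fibz (S k), fibz k).

Lemma fibz_SS (n : nat) : fibz (S (S n)) = fibz (S n) + fibz n.
Proof. unfold fibz; cbn [fib]; lia. Qed.

Lemma fibz_pos (n : nat) : 0 < fibz n.
Proof.
  enough (H : 0 < fibz n /\ 0 < fibz (S n)) by apply H.
  induction n as [| n [IH IHS]]; [now split |].
  split; [exact IHS | rewrite fibz_SS; lia].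
Qed.

Lemma det_fib_point_SS (n : nat) :
  det (fib_point (S (S n))) (fib_point n) = det (fib_point (S n)) (fib_point n).
Proof. unfold det, fib_point; cbn [fst snd]; rewrite !fibz_SS; ring. Qed.

Lemma det_fib_point_succ (n : nat) :
  det (fib_point (S (S n))) (fib_point (S n)) = - det (fib_point (S n)) (fib_point n).
Proof. unfold det, fib_point; cbn [fst snd]; rewrite !fibz_SS; ring. Qed.

Lemma abs_det_fib_point_succ (n : nat) :
  Z.abs (det (fib_point (S n)) (fib_point n)) = 1.
Proof.
  induction n as [| n IH]; [reflexivity |].
  now rewrite det_fib_point_succ, Z.abs_opp.
Qed.

Lemma farey_vertex_fib_point (k : nat) : farey_vertex (fib_point k).
Proof.
  split.
  - apply (gcd_of_unimodular (fib_point k) (fib_point (S k))).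
    now rewrite det_antisym, Z.abs_opp, abs_det_fib_point_succ.
  - left; apply fibz_pos.
Qed.

Lemma farey_adj_fib_point_infty (k : nat) :
  (k <= 1)%nat -> farey_adj (fib_point k) farey_infty.
Proof. destruct k as [| [| k]]; [reflexivity | reflexivity | lia]. Qed.

Lemma farey_adj_fib_point_SS (k : nat) :
  farey_adj (fib_point (S (S k))) (fib_point k).
Proof. now rewrite farey_adjE, det_fib_point_SS, abs_det_fib_point_succ. Qed.

Lemma div2_SS (k : nat) : (S (S k) / 2 = S (k / 2))%nat.
Proof. replace (S (S k)) with (k + 1 * 2)%nat by lia; rewrite Nat.div_add; lia. Qed.

Lemma farey_walk_fib_point_infty (k : nat) :
  farey_walk (fib_point k) farey_infty (k / 2 + 1)%nat.
Proof.
  induction k as [k IH] using lt_wf_ind.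
  destruct k as [| [| k]].
  1, 2: apply fw_cons with farey_infty; auto using farey_vertex_fib_point,
    farey_adj_fib_point_infty, fw_nil, farey_vertex_infty.
  rewrite div2_SS.
  apply fw_cons with (fib_point k); auto using farey_vertex_fib_point,
    farey_adj_fib_point_SS.
Qed.

Lemma side_fib_point (k : nat) :
  0 < side (fib_point k) (fib_point (S k)) (fib_point (S (S k))) /\
  side (fib_point k) (fib_point (S k)) farey_infty < 0.
Proof.
  rewrite side_infty; unfold side; split.
  - rewrite det_fib_point_SS, (det_antisym (fib_point (S k)) (fib_point (S (S k)))).
    rewrite det_fib_point_succ.
    pose proof (abs_det_fib_point_succ k); nia.
  - unfold fib_point; cbn [snd]; pose proof (fibz_pos (S k)); pose proof (fibz_pos k); nia.
Qed.

Lemma farey_walk_fib_point_infty_length (k n : nat) :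
  farey_walk (fib_point k) farey_infty n -> (k / 2 + 1 <= n)%nat.
Proof.
  revert n; induction k as [k IH] using lt_wf_ind; intros n Hw.
  destruct k as [| [| k]].
  1, 2: destruct n; [now apply farey_walk_0 in Hw | simpl; lia].
  destruct (side_fib_point k) as [Hin Hout].
  destruct (farey_walk_crosses_edge _ _ (abs_det_fib_point_succ k) _ _ _
              (fibz_pos _) (fibz_pos _) Hw Hin Hout) as [m [Hm [Hpw | Hpw]]].
  - apply IH in Hpw; [| lia].
    rewrite div2_SS; lia.
  - apply IH in Hpw; [| lia].
    pose proof (Nat.Div0.div_le_mono k (S k) 2 (Nat.le_succ_diag_r k)).
    rewrite div2_SS; lia.
Qed.

Theorem lemma4p5 : forall k : nat,
  farey_dist (Z.of_nat (fib (S k)), Z.of_nat (fib k)) farey_infty (k / 2 + 1)%nat.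
Proof.
  intro k; split.
  - apply (farey_walk_fib_point_infty k).
  - apply (farey_walk_fib_point_infty_length k).
Qed.
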